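(* The generating function $$F_{(213,231)}(x,p,q,u,v,s,t)=\sum_{n\ge0}\ \sum_{\pi\in S_n(213,231)} x^n p^{\operatorname{asc}(\pi)}q^{\operatorname{des}(\pi)}u^{\operatorname{lrmax}(\pi)}v^{\operatorname{rlmax}(\pi)}s^{\operatorname{lrmin}(\pi)}t^{\operatorname{rlmin}(\pi)}$$ is equal to $\dfrac{A}{(1-ptux)(1-ptx-qvx)(1-qsvx)}$, where $$\begin{aligned}A={}&1 - p t x - p t u x - q v x - q s v x + s t u v x + p^2 t^2 u x^2 + p q s t v x^2 + p q t u v x^2 + p q s t u v x^2 - p s t^2 u v x^2 + q^2 s v^2 x^2\\ &- q s t u v^2 x^2 - p^2 q s t^2 u v x^3 - p q^2 s t u v^2 x^3 + p q s^2 t^2 u v^2 x^3 + p q s t^2 u^2 v^2 x^3 - p q s^2 t^2 u^2 v^2 x^3.\end{aligned}$$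
   Context: For $n\ge 0$, $S_n$ denotes the set of permutations $\pi=\pi_1\cdots\pi_n$ of $[n]=\{1,\dots,n\}$ ($S_0$ consists of the empty permutation, for which all statistics are $0$). $\pi$ avoids a pattern $\tau\in S_k$ if no subsequence $\pi_{i_1}\cdots\pi_{i_k}$ ($i_1<\dots<i_k$) satisfies $\pi_{i_a}<\pi_{i_b}\iff\tau_a<\tau_b$; $S_n(\tau,\rho)$ is the set of permutations in $S_n$ avoiding both $\tau$ and $\rho$. $\operatorname{asc}(\pi)$ (resp. $\operatorname{des}(\pi)$) is the number of $i\in[n-1]$ with $\pi_i<\pi_{i+1}$ (resp. $\pi_i>\pi_{i+1}$). $\pi_i$ is a left-to-right maximum (resp. minimum) if it is larger (resp. smaller) than every $\pi_j$ with $j<i$, and a right-to-left maximum (resp. minimum) if it is larger (resp. smaller) than every $\pi_j$ with $j>i$; $\operatorname{lrmax},\operatorname{lrmin},\operatorname{rlmax},\operatorname{rlmin}$ count these. *)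

From mathcomp Require Import all_boot all_order all_algebra all_fingroup.
Set Implicit Arguments. Unset Strict Implicit. Unset Printing Implicit Defensive.
Import GRing.Theory.

(* One-line notation of a permutation of 'I_n, as a sequence of values
   (0-based values 0..n-1; all statistics below are invariant under this shift). *)
Definition pword (n : nat) (pi : 'S_n) : seq nat := [seq val (pi i) | i <- enum 'I_n].

Definition contains (n : nat) (pi : 'S_n) (tau : seq nat) : bool :=
  [exists f : {ffun 'I_(size tau) -> 'I_n},
     [forall a : 'I_(size tau), forall b : 'I_(size tau),
        ((a < b)%N ==> (f a < f b)%N) &&
        (((pi (f a) < pi (f b))%N) == (nth 0 tau a < nth 0 tau b)%N)]].

Definition avoids (n : nat) (pi : 'S_n) (tau : seq nat) : bool := ~~ contains pi tau.

Definition asc (w : seq nat) : nat := \sum_(i < (size w).-1) (nth 0 w i < nth 0 w i.+1)%N.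
Definition des (w : seq nat) : nat := \sum_(i < (size w).-1) (nth 0 w i.+1 < nth 0 w i)%N.
Definition lrmax (w : seq nat) : nat :=
  \sum_(i < size w) all (fun y => y < nth 0 w i)%N (take i w).
Definition lrmin (w : seq nat) : nat :=
  \sum_(i < size w) all (fun y => nth 0 w i < y)%N (take i w).
Definition rlmax (w : seq nat) : nat :=
  \sum_(i < size w) all (fun y => y < nth 0 w i)%N (drop i.+1 w).
Definition rlmin (w : seq nat) : nat :=
  \sum_(i < size w) all (fun y => nth 0 w i < y)%N (drop i.+1 w).

Local Open Scope ring_scope.

Definition Fcoef (R : comRingType) (p q u v s t : R) (n : nat) : R :=
  \sum_(pi : 'S_n | avoids pi [:: 2; 1; 3]%N && avoids pi [:: 2; 3; 1]%N)
    let w := pword pi in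
    p ^+ asc w * q ^+ des w * u ^+ lrmax w * v ^+ rlmax w * s ^+ lrmin w * t ^+ rlmin w.

Definition Ftrunc (R : comRingType) (p q u v s t : R) (N : nat) : {poly R} :=
  \sum_(n < N.+1) (Fcoef p q u v s t n)%:P * 'X^n.

Definition mon (R : comRingType) (c : R) (k : nat) : {poly R} := c%:P * 'X^k.

Definition Anum (R : comRingType) (p q u v s t : R) : {poly R} :=
  1 - mon (p*t) 1 - mon (p*t*u) 1 - mon (q*v) 1 - mon (q*s*v) 1 + mon (s*t*u*v) 1
  + mon (p^+2*t^+2*u) 2 + mon (p*q*s*t*v) 2 + mon (p*q*t*u*v) 2 + mon (p*q*s*t*u*v) 2
  - mon (p*s*t^+2*u*v) 2 + mon (q^+2*s*v^+2) 2
  - mon (q*s*t*u*v^+2) 2 - mon (p^+2*q*s*t^+2*u*v) 3 - mon (p*q^+2*s*t*u*v^+2) 3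
  + mon (p*q*s^+2*t^+2*u*v^+2) 3 + mon (p*q*s*t^+2*u^+2*v^+2) 3
  - mon (p*q*s^+2*t^+2*u^+2*v^+2) 3.

Definition Aden (R : comRingType) (p q u v s t : R) : {poly R} :=
  (1 - mon (p*t*u) 1) * (1 - mon (p*t) 1 - mon (q*v) 1) * (1 - mon (q*s*v) 1).

From mathcomp Require Import all_boot all_order all_algebra all_fingroup.
From mathcomp Require Import ring zify.
Import GRing.Theory.

Set Implicit Arguments. Unset Strict Implicit. Unset Printing Implicit Defensive.

(* A permutation avoids 213 and 231 exactly when each entry is smaller than all
   the entries to its right or larger than all of them.  Such permutations of
   {0, ..., m} are thus encoded by words c in {min, max}^m recording which
   extreme of the remaining values is taken at each step, the last entry being
   forced.  Under this encoding asc and rlmin - 1 count the min-steps, des and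
   rlmax - 1 count the max-steps, while lrmax - 1 and lrmin - 1 are the lengths
   of the initial runs of min-steps and of max-steps.  Splitting on the first
   letter of c gives first-order linear recurrences for the weighted sums, with
   characteristic roots ptu, pt + qv and qsv; so the denominator kills every
   coefficient of F from degree 5 on, and the lower ones are computed directly. *)

Fixpoint minmax_word (lo : nat) (c : seq bool) : seq nat :=
  match c with
  | [::] => [:: lo]
  | true :: c' => lo :: minmax_word lo.+1 c'
  | false :: c' => lo + (size c').+1 :: minmax_word lo c'
  end.

Fixpoint suffix_extremal (w : seq nat) : bool :=
  if w is a :: w' then
    (all (fun y => a <= y) w' || all (fun y => y <= a) w') && suffix_extremal w'
  else true.

Lemma size_minmax_word lo c : size (minmax_word lo c) = (size c).+1.
Proof. by elim: c lo => [|[] c IH] lo //=; rewrite IH. Qed.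

Lemma perm_minmax_word lo c : perm_eq (minmax_word lo c) (iota lo (size c).+1).
Proof.
elim: c lo => [|[] c IH] lo //; first by rewrite /= perm_cons IH.
rewrite [minmax_word _ _]/= [size _]/= -[(size c).+2]addn1 iotaD.
by rewrite perm_sym perm_catC /= perm_cons perm_sym IH.
Qed.

Lemma mem_minmax_word lo c x : (x \in minmax_word lo c) = (lo <= x <= lo + size c).
Proof. by rewrite (perm_mem (perm_minmax_word lo c)) mem_iota addnS ltnS. Qed.

Lemma minmax_word_inj lo : injective (minmax_word lo).
Proof.
move=> c1 c2; elim: c1 lo c2 => [|b1 c1 IH] lo [|b2 c2] //.
- by move/(congr1 size); rewrite !size_minmax_word.
- by move/(congr1 size); rewrite !size_minmax_word.
by case: b1 b2 => [] [] /= [] => [/IH ->| eq_lo _| eq_lo _| _ /IH ->] //; lia.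
Qed.

Lemma suffix_extremal_minmax_word lo c : suffix_extremal (minmax_word lo c).
Proof.
elim: c lo => [|[] c IH] lo //=; rewrite IH andbT; apply/orP.
- by left; apply/allP => x; rewrite mem_minmax_word; lia.
- by right; apply/allP => x; rewrite mem_minmax_word; lia.
Qed.

Lemma suffix_extremal_minmax_wordP lo m w :
  suffix_extremal w -> perm_eq w (iota lo m.+1) ->
  exists2 c, size c = m & w = minmax_word lo c.
Proof.
elim: m lo w => [|m IH] lo w.
  move=> _ perm_w; exists [::] => //.
  case: w perm_w (perm_size perm_w) => [|a [|]] // perm_w _.
  by have := perm_mem perm_w a; rewrite !inE eqxx => /esym/eqP ->.
case: w => [|a w]; first by move=> _ /perm_size.
move=> /andP[a_extremal w_extremal] perm_aw.
have mem_w x : x \in iota lo m.+2 -> x != a -> x \in w.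
  by rewrite -(perm_mem perm_aw) inE => /orP[->|].
have iota_max : iota lo m.+2 = iota lo m.+1 ++ [:: lo + m.+1] by rewrite -addn1 iotaD.
have [a_lo|a_ne_lo] := eqVneq a lo.
  move: perm_aw; rewrite a_lo perm_cons => /(IH _ _ w_extremal) [c size_c ->].
  by exists (true :: c); rewrite /= ?size_c.
have [a_hi|a_ne_hi] := eqVneq a (lo + m.+1).
  move: perm_aw; rewrite iota_max perm_sym perm_catC cat1s -a_hi perm_cons perm_sym.
  move=> /(IH _ _ w_extremal) [c size_c ->].
  by exists (false :: c); rewrite /= size_c ?a_hi.
have lo_w : lo \in w by apply: mem_w; rewrite ?mem_iota; lia.
have hi_w : lo + m.+1 \in w by apply: mem_w; rewrite ?mem_iota; lia.
have := perm_mem perm_aw a; rewrite mem_head mem_iota => /esym a_bounds.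
by case/orP: a_extremal => /allP a_ext; [have := a_ext _ lo_w | have := a_ext _ hi_w]; lia.
Qed.

Lemma asc_cons a w : asc (a :: w) = (a < head a w) + asc w.
Proof.
case: w => [|b w]; first by rewrite /asc /= !big_ord0 ltnn.
by rewrite /asc big_ord_recl.
Qed.

Lemma des_cons a w : des (a :: w) = (head a w < a) + des w.
Proof.
case: w => [|b w]; first by rewrite /des /= !big_ord0 ltnn.
by rewrite /des big_ord_recl.
Qed.

Lemma rlmax_cons a w : rlmax (a :: w) = all (fun y => y < a) w + rlmax w.
Proof. by rewrite /rlmax big_ord_recl /= drop0. Qed.

Lemma rlmin_cons a w : rlmin (a :: w) = all (fun y => a < y) w + rlmin w.
Proof. by rewrite /rlmin big_ord_recl /= drop0. Qed.

Lemma lrmax_cons_min a w : all (fun y => a < y) w -> lrmax (a :: w) = (lrmax w).+1.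
Proof.
move=> /allP a_min; rewrite /lrmax big_ord_recl /= add1n; congr _.+1.
by apply: eq_bigr => i _; rewrite add0n a_min // (mem_nth 0 (ltn_ord i)).
Qed.

Lemma lrmax_cons_max a w : all (fun y => y < a) w -> lrmax (a :: w) = 1.
Proof.
move=> /allP a_max; rewrite /lrmax big_ord_recl /= big1 // => i _ /=.
by rewrite ltnNge ltnW // a_max // (mem_nth 0 (ltn_ord i)).
Qed.

Lemma lrmin_cons_max a w : all (fun y => y < a) w -> lrmin (a :: w) = (lrmin w).+1.
Proof.
move=> /allP a_max; rewrite /lrmin big_ord_recl /= add1n; congr _.+1.
by apply: eq_bigr => i _; rewrite add0n a_max // (mem_nth 0 (ltn_ord i)).
Qed.

Lemma lrmin_cons_min a w : all (fun y => a < y) w -> lrmin (a :: w) = 1.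
Proof.
move=> /allP a_min; rewrite /lrmin big_ord_recl /= big1 // => i _ /=.
by rewrite ltnNge ltnW // a_min // (mem_nth 0 (ltn_ord i)).
Qed.

Lemma minmax_word_gt lo c : all (fun y => lo < y) (minmax_word lo.+1 c).
Proof. by apply/allP => y; rewrite mem_minmax_word; lia. Qed.

Lemma minmax_word_lt lo c : all (fun y => y < lo + (size c).+1) (minmax_word lo c).
Proof. by apply/allP => y; rewrite mem_minmax_word; lia. Qed.

Lemma head_minmax_word_gt lo c : lo < head lo (minmax_word lo.+1 c).
Proof. by apply: (allP (minmax_word_gt lo c)); case: c => [|[] c]; rewrite mem_head. Qed.

Lemma head_minmax_word_lt lo c : head (lo + (size c).+1) (minmax_word lo c) < lo + (size c).+1.
Proof. by apply: (allP (minmax_word_lt lo c)); case: c => [|[] c]; rewrite mem_head. Qed.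

Lemma asc_minmax_word lo c : asc (minmax_word lo c) = count id c.
Proof.
elim: c lo => [|[] c IH] lo; first by rewrite /asc /= big_ord0.
- by rewrite [minmax_word _ _]/= asc_cons head_minmax_word_gt IH.
- by rewrite [minmax_word _ _]/= asc_cons IH ltnNge ltnW ?head_minmax_word_lt.
Qed.

Lemma des_minmax_word lo c : des (minmax_word lo c) = count negb c.
Proof.
elim: c lo => [|[] c IH] lo; first by rewrite /des /= big_ord0.
- by rewrite [minmax_word _ _]/= des_cons IH ltnNge ltnW ?head_minmax_word_gt.
- by rewrite [minmax_word _ _]/= des_cons head_minmax_word_lt IH.
Qed.

Lemma rlmax_minmax_word lo c : rlmax (minmax_word lo c) = (count negb c).+1.
Proof.
elim: c lo => [|[] c IH] lo; first by rewrite /rlmax /= big_ord1.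
- rewrite [minmax_word _ _]/= rlmax_cons IH.
  suff -> : all (fun y => y < lo) (minmax_word lo.+1 c) = false by [].
  by apply/negbTE/allPn; exists lo.+1; rewrite ?mem_minmax_word; lia.
- by rewrite [minmax_word _ _]/= rlmax_cons minmax_word_lt IH.
Qed.

Lemma rlmin_minmax_word lo c : rlmin (minmax_word lo c) = (count id c).+1.
Proof.
elim: c lo => [|[] c IH] lo; first by rewrite /rlmin /= big_ord1.
- by rewrite [minmax_word _ _]/= rlmin_cons minmax_word_gt IH.
- rewrite [minmax_word _ _]/= rlmin_cons IH.
  suff -> : all (fun y => lo + (size c).+1 < y) (minmax_word lo c) = false by [].
  by apply/negbTE/allPn; exists lo; rewrite ?mem_minmax_word; lia.
Qed.

Lemma lrmax_minmax_word lo c : lrmax (minmax_word lo c) = (find negb c).+1.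
Proof.
elim: c lo => [|[] c IH] lo; first by rewrite /lrmax /= big_ord1.
- by rewrite [minmax_word _ _]/= lrmax_cons_min ?minmax_word_gt // IH.
- by rewrite [minmax_word _ _]/= lrmax_cons_max ?minmax_word_lt.
Qed.

Lemma lrmin_minmax_word lo c : lrmin (minmax_word lo c) = (find id c).+1.
Proof.
elim: c lo => [|[] c IH] lo; first by rewrite /lrmin /= big_ord1.
- by rewrite [minmax_word _ _]/= lrmin_cons_min ?minmax_word_gt.
- by rewrite [minmax_word _ _]/= lrmin_cons_max ?minmax_word_lt // IH.
Qed.

Definition straddled (w : seq nat) : Prop := exists i j k,
  [/\ i < j, i < k, j < size w, k < size w & nth 0 w j < nth 0 w i < nth 0 w k].

Lemma suffix_extremalPn w : reflect (straddled w) (~~ suffix_extremal w).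
Proof.
apply: (iffP idP).
- elim: w => [|a w IH] //=; rewrite negb_and => /orP[|/IH [i [j [k [ij ik jw kw wijk]]]]].
    rewrite negb_or => /andP[/allPn [y y_w a_gt_y] /allPn [z z_w a_lt_z]].
    exists 0, (index y w).+1, (index z w).+1.
    by rewrite /= !ltnS !index_mem !nth_index //; split => //; lia.
  by exists i.+1, j.+1, k.+1.
- elim: w => [|a w IH] /=; first by case=> i [j [k []]].
  move=> [[|i] [[|j] [[|k] [//= ij ik jw kw wijk]]]]; rewrite negb_and.
    by apply/orP; left; rewrite negb_or; apply/andP; split; apply/allPn;
      [exists (nth 0 w j) | exists (nth 0 w k)]; rewrite ?mem_nth //; lia.
  by apply/orP; right; apply: IH; exists i, j, k.
Qed.

Lemma size_pword n (pi : 'S_n) : size (pword pi) = n.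
Proof. by rewrite size_map size_enum_ord. Qed.

Lemma nth_pword n (pi : 'S_n) (i : 'I_n) : nth 0 (pword pi) i = pi i.
Proof. by rewrite (nth_map i) ?size_enum_ord // nth_ord_enum. Qed.

Lemma pword_inj n : injective (@pword n).
Proof.
move=> pi1 pi2 eq_w; apply/permP => i; apply: val_inj.
by rewrite -[LHS]nth_pword -[RHS]nth_pword eq_w.
Qed.

Lemma perm_pword n (pi : 'S_n) : perm_eq (pword pi) (iota 0 n).
Proof.
apply: uniq_perm; rewrite ?iota_uniq //.
  by rewrite map_inj_uniq ?enum_uniq // => i j /val_inj /perm_inj.
move=> x; rewrite mem_iota add0n; apply/mapP/idP => [[i _ ->] | x_lt_n]; first exact: ltn_ord.
by exists ((pi^-1)%g (Ordinal x_lt_n)); rewrite ?mem_enum ?permKV.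
Qed.

Lemma pwordP n w : perm_eq w (iota 0 n) -> exists pi : 'S_n, pword pi = w.
Proof.
move=> perm_w; have size_w : size w = n by rewrite (perm_size perm_w) size_iota.
have w_lt_n (i : 'I_n) : nth 0 w i < n.
  have : nth 0 w i \in iota 0 n by rewrite -(perm_mem perm_w) mem_nth ?size_w.
  by rewrite mem_iota.
pose f (i : 'I_n) : 'I_n := Ordinal (w_lt_n i).
have f_inj : injective f.
  move=> i j /(congr1 val) /= /eqP.
  by rewrite nth_uniq ?size_w ?(perm_uniq perm_w) ?iota_uniq // => /eqP /val_inj.
exists (perm f_inj); apply: (@eq_from_nth _ 0); rewrite size_pword ?size_w // => i i_lt_n.
by rewrite -[i]/(val (Ordinal i_lt_n)) nth_pword permE.
Qed.

Lemma ltn_flip m n : m != n -> (n < m) = ~~ (m < n).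
Proof. by move=> m_ne_n; rewrite ltnNge leq_eqVlt (negbTE m_ne_n). Qed.

Lemma perm_ltn_flip n (pi : 'S_n) (i j : 'I_n) : i < j -> (pi j < pi i) = ~~ (pi i < pi j).
Proof.
move=> ij; apply: ltn_flip; rewrite val_eqE (inj_eq perm_inj).
by apply: contraTneq ij => ->; rewrite ltnn.
Qed.

Lemma contains3P n (pi : 'S_n) x1 x2 x3 : uniq [:: x1; x2; x3] ->
  reflect (exists i1 i2 i3 : 'I_n, [/\ i1 < i2, i2 < i3,
             (pi i1 < pi i2) = (x1 < x2), (pi i1 < pi i3) = (x1 < x3)
           & (pi i2 < pi i3) = (x2 < x3)])
          (contains pi [:: x1; x2; x3]).
Proof.
rewrite /= !inE negb_or andbT => /andP[/andP[x12 x13] x23].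
apply: (iffP existsP) => [[f /forallP occ] | [i1 [i2 [i3 [i12 i23 e12 e13 e23]]]]].
  pose o a (a_lt_3 : a < 3) := (Ordinal a_lt_3 : 'I_(size [:: x1; x2; x3])).
  have pair a b (ha : a < 3) (hb : b < 3) := andP (forallP (occ (o a ha)) (o b hb)).
  have [/implyP/(_ isT) i12 /eqP e12] := pair 0 1 isT isT.
  have [/implyP/(_ isT) i23 /eqP e23] := pair 1 2 isT isT.
  have [_ /eqP e13] := pair 0 2 isT isT.
  by exists (f (o 0 isT)), (f (o 1 isT)), (f (o 2 isT)).
have i13 : i1 < i3 := ltn_trans i12 i23.
exists [ffun a : 'I_3 => nth i1 [:: i1; i2; i3] a].
apply/forallP => -[[|[|[|a]]] ha] //; apply/forallP => -[[|[|[|b]]] hb] //.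
(* The pairs a > b follow from the pairs a < b, as both pi and the pattern are injective. *)
all: rewrite !ffunE /= ?ltnn ?eqxx //= ?(perm_ltn_flip pi i12) ?(perm_ltn_flip pi i13)
  ?(perm_ltn_flip pi i23) ?(ltn_flip x12) ?(ltn_flip x13) ?(ltn_flip x23).
all: by rewrite ?i12 ?i13 ?i23 ?e12 ?e13 ?e23 ?eqxx.
Qed.

Lemma straddled_pword n (pi : 'S_n) :
  straddled (pword pi) <-> contains pi [:: 2; 1; 3] || contains pi [:: 2; 3; 1].
Proof.
have nthE m (m_lt_n : m < n) : nth 0 (pword pi) m = pi (Ordinal m_lt_n) :=
  nth_pword pi (Ordinal m_lt_n).
split.
- move=> [i [j [k [ij ik]]]]; rewrite size_pword => j_lt_n k_lt_n.
  have i_lt_n := ltn_trans ij j_lt_n.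
  rewrite (nthE i i_lt_n) (nthE j j_lt_n) (nthE k k_lt_n) => /andP[pi_ji pi_ik].
  have [jk|kj|j_eq_k] := ltngtP j k.
  + apply/orP; left; apply/contains3P => //.
    exists (Ordinal i_lt_n), (Ordinal j_lt_n), (Ordinal k_lt_n).
    by split => //=; rewrite ?(ltn_trans pi_ji pi_ik) // ltnNge (ltnW pi_ji).
  + apply/orP; right; apply/contains3P => //.
    exists (Ordinal i_lt_n), (Ordinal k_lt_n), (Ordinal j_lt_n).
    by split => //=; rewrite ltnNge ltnW // (ltn_trans pi_ji pi_ik).
  + subst k; have := ltn_trans pi_ji pi_ik.
    by rewrite (bool_irrelevance k_lt_n j_lt_n) ltnn.
- case/orP=> /contains3P-/(_ isT) [i1 [i2 [i3 [i12 i23 e12 e13 e23]]]].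
  + exists i1, i2, i3; rewrite size_pword !nth_pword (ltn_trans i12 i23).
    by split => //; rewrite (perm_ltn_flip pi i12) e12 e13.
  + exists i1, i3, i2; rewrite size_pword !nth_pword (ltn_trans i12 i23).
    by split => //; rewrite (perm_ltn_flip pi (ltn_trans i12 i23)) e12 e13.
Qed.

Lemma avoids_213_231 n (pi : 'S_n) :
  avoids pi [:: 2; 1; 3] && avoids pi [:: 2; 3; 1] = suffix_extremal (pword pi).
Proof.
rewrite /avoids -negb_or; apply/idP/idP; apply: contraLR; rewrite negbK.
- by move=> /suffix_extremalPn /straddled_pword.
- by move=> /straddled_pword /suffix_extremalPn.
Qed.

Fixpoint bool_seqs (m : nat) : seq (seq bool) :=
  if m is m'.+1 then [seq true :: c | c <- bool_seqs m'] ++ [seq false :: c | c <- bool_seqs m']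
  else [:: [::]].

Lemma mem_map_cons (T : eqType) (x y : T) s (ss : seq (seq T)) :
  (x :: s \in [seq y :: t | t <- ss]) = (x == y) && (s \in ss).
Proof. by apply/mapP/andP => [[t t_ss [-> ->]] | [/eqP -> s_ss]]; [split | exists s]. Qed.

Lemma mem_bool_seqs m c : (c \in bool_seqs m) = (size c == m).
Proof.
elim: m c => [|m IH] [|b c] //=; rewrite mem_cat ?mem_map_cons ?IH ?eqSS.
- by apply/negbTE/norP; split; apply/mapP => -[].
- by case: b; rewrite ?orbF.
Qed.

Lemma uniq_bool_seqs m : uniq (bool_seqs m).
Proof.
have cons_inj (b : bool) : injective (cons b) by move=> ? ? [].
elim: m => [|m IH] //=; rewrite cat_uniq !map_inj_uniq // IH andbT /=.
by apply/hasPn => _ /mapP [c _ ->]; rewrite mem_map_cons.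
Qed.

Local Open Scope ring_scope.

Definition word_weight (R : comRingType) (p q u v s t : R) (w : seq nat) : R :=
  p ^+ asc w * q ^+ des w * u ^+ lrmax w * v ^+ rlmax w * s ^+ lrmin w * t ^+ rlmin w.

Section LeadWeight.
Variables (R : comRingType) (x y : R).

Definition lead_weight (a b : R) (m : nat) : R :=
  \sum_(c <- bool_seqs m) x ^+ count id c * y ^+ count negb c * a ^+ find negb c * b ^+ find id c.

Lemma lead_weight0 a b : lead_weight a b 0 = 1.
Proof. by rewrite /lead_weight big_seq1 !expr0 !mulr1. Qed.

Lemma lead_weightS a b m :
  lead_weight a b m.+1 = x * a * lead_weight a 1 m + y * b * lead_weight 1 b m.
Proof.
rewrite /lead_weight big_cat !big_map !mulr_sumr.
by congr (_ + _); apply: eq_bigr => c _ /=; rewrite !exprS !expr0 !expr1n; ring.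
Qed.

Lemma lead_weight_rec a b m :
  lead_weight a b m.+4 = (x * a + (x + y) + y * b) * lead_weight a b m.+3
    - (x * a * (x + y) + x * a * (y * b) + (x + y) * (y * b)) * lead_weight a b m.+2
    + x * a * (x + y) * (y * b) * lead_weight a b m.+1.
Proof. rewrite !lead_weightS; ring. Qed.

End LeadWeight.

Section Coefficients.
Variables (R : comRingType) (p q u v s t : R).

Lemma Fcoef0 : Fcoef p q u v s t 0 = 1.
Proof.
have pword0 (pi : 'S_0) : pword pi = [::] by apply: size0nil; rewrite size_pword.
rewrite /Fcoef (eq_bigl xpredT) => [|pi]; last by rewrite avoids_213_231 pword0.
rewrite (eq_bigr (fun _ => 1)) => [|pi _]; last first.
  by rewrite pword0 /asc /des /lrmax /rlmax /lrmin /rlmin !big_ord0 !expr0 !mulr1.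
by rewrite sumr_const card_Sn.
Qed.

Lemma Fcoef_minmax_words m :
  Fcoef p q u v s t m.+1 = \sum_(c <- bool_seqs m) word_weight p q u v s t (minmax_word 0 c).
Proof.
rewrite /Fcoef (eq_bigl _ _ (@avoids_213_231 m.+1)).
rewrite (eq_bigr (fun pi => word_weight p q u v s t (pword pi))) //.
rewrite -(big_map (@pword m.+1) suffix_extremal) -big_filter -(big_map (minmax_word 0) xpredT).
apply/perm_big/uniq_perm.
- by rewrite filter_uniq // map_inj_uniq ?index_enum_uniq //; exact: pword_inj.
- by rewrite map_inj_uniq ?uniq_bool_seqs //; exact: minmax_word_inj.
move=> w; rewrite mem_filter; apply/andP/mapP => [[extremal_w /mapP [pi _ w_pi]] | [c c_m ->]].
- move: extremal_w; rewrite w_pi.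
  move=> /suffix_extremal_minmax_wordP /(_ (perm_pword pi)) [c size_c ->].
  by exists c; rewrite ?mem_bool_seqs ?size_c.
- split; first exact: suffix_extremal_minmax_word.
  move: c_m (perm_minmax_word 0 c); rewrite mem_bool_seqs => /eqP -> /pwordP [pi <-].
  by rewrite map_f ?mem_index_enum.
Qed.

Lemma word_weight_minmax_word c : word_weight p q u v s t (minmax_word 0 c) =
  u * v * s * t *
  ((p * t) ^+ count id c * (q * v) ^+ count negb c * u ^+ find negb c * s ^+ find id c).
Proof.
rewrite /word_weight asc_minmax_word des_minmax_word lrmax_minmax_word rlmax_minmax_word.
by rewrite lrmin_minmax_word rlmin_minmax_word !exprS !exprMn; ring.
Qed.

Lemma FcoefS m : Fcoef p q u v s t m.+1 = u * v * s * t * lead_weight (p * t) (q * v) u s m.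
Proof.
rewrite Fcoef_minmax_words /lead_weight mulr_sumr.
by apply: eq_bigr => c _; rewrite word_weight_minmax_word.
Qed.

End Coefficients.

Lemma coef_monM (R : comRingType) (c : R) j (P : {poly R}) k :
  (mon c j * P)`_k = if (k < j)%N then 0 else c * P`_(k - j).
Proof. by rewrite /mon -mulrA coefCM coefXnM; case: ifP; rewrite ?mulr0. Qed.

Lemma coef_mon (R : comRingType) (c : R) j k : (mon c j)`_k = if k == j then c else 0.
Proof. by rewrite /mon coefCM coefXn; case: eqP; rewrite ?mulr1 ?mulr0. Qed.

Lemma coef_Ftrunc (R : comRingType) (p q u v s t : R) N j :
  (j <= N)%N -> (Ftrunc p q u v s t N)`_j = Fcoef p q u v s t j.
Proof.
move=> j_le_N; rewrite /Ftrunc coef_sum (bigD1 (Ordinal (j_le_N : j < N.+1)%N)) //=.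
rewrite -/(mon _ j) coef_mon eqxx big1 ?addr0 // => i i_ne_j.
rewrite -/(mon _ i) coef_mon; case: eqP => // j_i.
by case/eqP: i_ne_j; apply: val_inj; rewrite /= j_i.
Qed.

Lemma Aden_mon (R : comRingType) (p q u v s t : R) :
  let a := p * t * u in let b := p * t + q * v in let c := q * s * v in
  Aden p q u v s t =
    mon 1 0 + mon (- (a + b + c)) 1 + mon (a * b + a * c + b * c) 2 + mon (- (a * b * c)) 3.
Proof. by rewrite /Aden /mon; ring. Qed.

Theorem theorem9 (R : comRingType) (p q u v s t : R) (N k : nat) :
  (k <= N)%N ->
  (Aden p q u v s t * Ftrunc p q u v s t N)`_k = (Anum p q u v s t)`_k.
Proof.
move=> k_le_N.
rewrite Aden_mon !mulrDl !coefD !coef_monM subn0.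
rewrite !coef_Ftrunc ?(leq_trans (leq_subr _ _) k_le_N) //.
rewrite /Anum !(coefD, coefN) coef1 !coef_mon.
case: k k_le_N => [|[|[|[|[|m]]]]] _ /=; rewrite ?subSS ?subn0 ?Fcoef0 ?FcoefS; last first.
  by rewrite lead_weight_rec; ring.
all: by rewrite ?lead_weightS ?lead_weight0; ring.
Qed.
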